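(* Let $M$ be a matroid on $S$ and $N$ a matroid on $T$ with $S\cap T=\emptyset$, and let $L=M\mathbin{\Box} N$. A set $C\subseteq S\cup T$ is a circuit of $L$ if and only if either $C\subseteq S$ and $C$ is a circuit of $M$, or $C\cap S$ is independent in $M$, the restriction $N|(C\cap T)$ has no isthmus, and $\lambda_M(C\cap S)+1=\nu_N(C\cap T)$.
   Context: For a matroid $M$ on $S$ write $\rho_M$ for rank, $\rho(M)=\rho_M(S)$, $\nu_M(A)=|A|-\rho_M(A)$, $\lambda_M(A)=\rho(M)-\rho_M(A)$. For matroids $M$ on $S$ and $N$ on $T$ with $S\cap T=\emptyset$, the free product $M\mathbin{\Box} N$ is the matroid on $S\cup T$ whose independent sets are those $A$ with $A\cap S$ independent in $M$ and $\lambda_M(A\cap S)\geq\nu_N(A\cap T)$. *)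

From mathcomp Require Import all_boot.
Set Implicit Arguments. Unset Strict Implicit. Unset Printing Implicit Defensive.

Record matroid (T : finType) := Matroid {
  indep : {set T} -> bool;
  indep0 : indep set0;
  indep_sub : forall A B : {set T}, A \subset B -> indep B -> indep A;
  indep_aug : forall A B : {set T}, indep A -> indep B -> #|A| < #|B| ->
      exists2 x, x \in B :\: A & indep (x |: A)
}.

Definition rank (T : finType) (M : matroid T) (A : {set T}) : nat :=
  \max_(B : {set T} | (B \subset A) && indep M B) #|B|.

Definition mrank (T : finType) (M : matroid T) : nat := rank M setT.

Definition nu (T : finType) (M : matroid T) (A : {set T}) : nat :=
  #|A| - rank M A.

Definition lambda (T : finType) (M : matroid T) (A : {set T}) : nat :=
  mrank M - rank M A.

Definition is_circuit_of (T : finType) (I : {set T} -> bool) (C : {set T}) : Prop :=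
  ~~ I C /\ forall D : {set T}, D \proper C -> I D.

Definition circuit (T : finType) (M : matroid T) (C : {set T}) : Prop :=
  is_circuit_of (indep M) C.

Definition basis_of (T : finType) (M : matroid T) (X B : {set T}) : Prop :=
  [/\ B \subset X, indep M B &
      forall B' : {set T}, B \subset B' -> B' \subset X -> indep M B' -> B' = B].

Definition isthmus_restr (T : finType) (M : matroid T) (X : {set T}) (e : T) : Prop :=
  e \in X /\ forall B, basis_of M X B -> e \in B.

Definition no_isthmus_restr (T : finType) (M : matroid T) (X : {set T}) : Prop :=
  forall e, ~ isthmus_restr M X e.

(* The disjoint union S ∪ T is modelled by the sum type S + T. *)
Definition partS (S T : finType) (A : {set S + T}) : {set S} := inl @^-1: A.
Definition partT (S T : finType) (A : {set S + T}) : {set T} := inr @^-1: A.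

Definition free_product_indep (S T : finType) (M : matroid S) (N : matroid T)
  (A : {set S + T}) : bool :=
  indep M (partS A) && (nu N (partT A) <= lambda M (partS A)).

From mathcomp Require Import all_boot zify.

Set Implicit Arguments.
Unset Strict Implicit.
Unset Printing Implicit Defensive.

(* Independence in M □ N is closed under subsets, so C is a circuit exactly
   when C is dependent and every C - x is independent.  Deleting an element of
   S from an M-independent C ∩ S raises λ_M by exactly one, while deleting an
   element t of T lowers ν_N(C ∩ T) by one precisely when t is not an isthmus
   of N|(C ∩ T).  Minimal dependence of a circuit meeting T therefore forces
   ν_N(C ∩ T) = λ_M(C ∩ S) + 1 and the absence of isthmuses, and conversely. *)

Lemma is_circuit_ofP (T : finType) (I : {set T} -> bool) (C : {set T}) :
  (forall A B : {set T}, A \subset B -> I B -> I A) ->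
  is_circuit_of I C <-> ~~ I C /\ {in C, forall x, I (C :\ x)}.
Proof.
move=> I_sub; split=> -[depC minC]; split=> //.
  move=> x xC; apply: minC; apply/properP.
  by split; [exact: subsetDl | exists x; rewrite ?setD11].
move=> D /properP[sDC [x xC xD]]; apply: I_sub (minC x xC); apply/subsetP => y yD.
by rewrite in_setD1 (subsetP sDC) // andbT; apply: contraNneq xD => <-.
Qed.

Section Rank.
Variables (T : finType) (M : matroid T).
Implicit Types A B X : {set T}.

Lemma rank_witness A :
  exists2 B : {set T}, (B \subset A) && indep M B & #|B| = rank M A.
Proof.
have nonempty : 0 < #|[pred B : {set T} | (B \subset A) && indep M B]|.
  by apply/card_gt0P; exists set0; rewrite inE sub0set indep0.
have [B HB maxB] := eq_bigmax_cond (fun B : {set T} => #|B|) nonempty.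
by exists B; [rewrite inE in HB | rewrite /rank -maxB].
Qed.

Lemma leq_card_rank A B : B \subset A -> indep M B -> #|B| <= rank M A.
Proof.
by move=> sBA iB; apply: (bigmax_sup B) => //; rewrite sBA.
Qed.

Lemma rank_leq_card A : rank M A <= #|A|.
Proof. by have [B /andP[sBA _] <-] := rank_witness A; exact: subset_leq_card. Qed.

Lemma rank_indep A : indep M A -> rank M A = #|A|.
Proof. by move=> iA; apply/eqP; rewrite eqn_leq rank_leq_card leq_card_rank. Qed.

Lemma rankS {A B} : A \subset B -> rank M A <= rank M B.
Proof.
move=> sAB; have [D /andP[sDA iD] <-] := rank_witness A.
exact: leq_card_rank (subset_trans sDA sAB) iD.
Qed.

Lemma rank_leq_mrank A : rank M A <= mrank M.
Proof. exact: rankS (subsetT A). Qed.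

Lemma rank_leq_card_setD {A B} : A \subset B -> rank M B <= rank M A + #|B :\: A|.
Proof.
move=> sAB; have [D /andP[sDB iD] <-] := rank_witness B.
rewrite -(cardsID A D) leq_add //; last exact/subset_leq_card/setSD.
by apply: leq_card_rank (subsetIr _ _) (indep_sub (subsetIl _ _) iD).
Qed.

Lemma basis_card_rank {X B} : basis_of M X B -> #|B| = rank M X.
Proof.
case=> sBX iB maxB; apply/eqP; rewrite eqn_leq leq_card_rank //=.
have [D /andP[sDX iD] <-] := rank_witness X.
rewrite leqNgt; apply/negP => ltBD.
have [x /setDP[xD xB] ixB] := indep_aug iB iD ltBD.
have sxBX : x |: B \subset X by rewrite subUset sBX sub1set (subsetP sDX).
by move/setP/(_ x): (maxB _ (subsetUr _ _) sxBX ixB); rewrite !inE eqxx (negbTE xB).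
Qed.

Lemma isthmus_restrPn {X e} :
  e \in X -> ~ isthmus_restr M X e <-> rank M (X :\ e) = rank M X.
Proof.
move=> eX; split=> [not_isthmus | rank_eq [_ in_bases]].
  apply/eqP; rewrite eqn_leq rankS ?subsetDl //= leqNgt; apply/negP => lt_rank.
  apply: not_isthmus; split=> // B baseB; apply: contraTT lt_rank => eB.
  rewrite -leqNgt -(basis_card_rank baseB); case: baseB => sBX iB _.
  by apply: leq_card_rank iB; rewrite subsetD1 sBX.
have [B /andP[sBXe iB] cardB] := rank_witness (X :\ e).
suff /(subsetP sBXe) : e \in B by rewrite setD11.
apply: in_bases; split=> //; first exact: subset_trans sBXe (subsetDl _ _).
move=> B' sBB' sB'X iB'; apply/eqP; rewrite eq_sym eqEcard sBB' cardB rank_eq.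
exact: leq_card_rank.
Qed.

Lemma nuS {A B} : A \subset B -> nu M A <= nu M B.
Proof.
move=> sAB; have := rank_leq_card_setD sAB; have := cardsID A B.
have := rank_leq_card A; have := rank_leq_card B.
by rewrite /nu (setIidPr sAB); lia.
Qed.

Lemma nu_setD1 {X e} : e \in X -> nu M X <= (nu M (X :\ e)).+1.
Proof.
move=> eX; have := cardsD1 e X; have := rankS (subsetDl X [set e]).
by have := rank_leq_card (X :\ e); rewrite /nu eX; lia.
Qed.

Lemma no_isthmus_restrP X :
  no_isthmus_restr M X <-> {in X, forall e, nu M (X :\ e) < nu M X}.
Proof.
have nu_lt_rank e : e \in X ->
    (nu M (X :\ e) < nu M X) = (rank M (X :\ e) == rank M X).
  move=> eX; have := cardsD1 e X; have := rankS (subsetDl X [set e]).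
  have := rank_leq_card (X :\ e); have := rank_leq_card X.
  by rewrite /nu eX; lia.
split=> [not_isthmus e eX | nu_lt e isthmus_e].
  by rewrite nu_lt_rank //; apply/eqP/(isthmus_restrPn eX).
have eX := isthmus_e.1; apply: (isthmus_restrPn eX).2 isthmus_e.
by apply/eqP; rewrite -nu_lt_rank ?nu_lt.
Qed.

Lemma nu0 : nu M set0 = 0.
Proof. by rewrite /nu cards0. Qed.

Lemma lambda_antimono {A B} : A \subset B -> lambda M B <= lambda M A.
Proof. by move=> sAB; rewrite leq_sub2l ?rankS. Qed.

Lemma lambda_indep_setD1 A x :
  indep M A -> x \in A -> lambda M (A :\ x) = (lambda M A).+1.
Proof.
move=> iA xA; have := rank_leq_mrank A; have := cardsD1 x A.
rewrite /lambda !rank_indep ?(indep_sub (subsetDl A [set x])) // xA; lia.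
Qed.

End Rank.

Section FreeProduct.
Variables (S T : finType) (M : matroid S) (N : matroid T).
Implicit Types C D : {set S + T}.

Lemma partS_setD1_inl C s : partS (C :\ inl s) = partS C :\ s.
Proof. by apply/setP => y; rewrite !inE (inj_eq (@inl_inj S T)). Qed.

Lemma partT_setD1_inl C s : partT (C :\ inl s) = partT C.
Proof. by apply/setP => y; rewrite !inE. Qed.

Lemma partS_setD1_inr C t : partS (C :\ inr t) = partS C.
Proof. by apply/setP => y; rewrite !inE. Qed.

Lemma partT_setD1_inr C t : partT (C :\ inr t) = partT C :\ t.
Proof. by apply/setP => y; rewrite !inE (inj_eq (@inr_inj S T)). Qed.

Lemma partT_eq0 C : (C \subset [set inl x | x : S]) = (partT C == set0).
Proof.
apply/subsetP/eqP => [sCS | CT0 [s|t] xC]; first apply/setP => t.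
- by rewrite !inE; apply/negP => /sCS /imsetP[].
- exact: imset_f.
- by have := in_set0 t; rewrite -CT0 inE xC.
Qed.

Lemma free_product_indep_sub D C :
  D \subset C -> free_product_indep M N C -> free_product_indep M N D.
Proof.
move=> sDC /andP[iC nu_le]; have sDSC := preimsetS inl sDC.
rewrite /free_product_indep (indep_sub sDSC iC) /=.
exact: leq_trans (nuS N (preimsetS inr sDC)) (leq_trans nu_le (lambda_antimono M sDSC)).
Qed.

Lemma free_product_circuit_partT0 C :
  partT C = set0 -> is_circuit_of (free_product_indep M N) C <-> circuit M (partS C).
Proof.
move=> CT0.
have indepE D : D \subset C -> free_product_indep M N D = indep M (partS D).
  move=> sDC; have /eqP DT0 : partT D == set0.
    by rewrite -subset0 -CT0 preimsetS.
  by rewrite /free_product_indep DT0 nu0 andbT.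
rewrite /circuit !is_circuit_ofP; [|exact: indep_sub|exact: free_product_indep_sub].
rewrite indepE //; split=> -[depC minC]; split=> //.
  move=> s sC; rewrite inE in sC.
  by have := minC _ sC; rewrite indepE ?subsetDl // partS_setD1_inl.
move=> [s|t] xC; last by have := in_set0 t; rewrite -CT0 inE xC.
by rewrite indepE ?subsetDl // partS_setD1_inl; apply: minC; rewrite inE.
Qed.

Lemma free_product_circuit_partT_mem C t0 : t0 \in partT C ->
  is_circuit_of (free_product_indep M N) C <->
  [/\ indep M (partS C), no_isthmus_restr N (partT C) &
      lambda M (partS C) + 1 = nu N (partT C)].
Proof.
move=> t0C; rewrite is_circuit_ofP; last exact: free_product_indep_sub.
rewrite /free_product_indep addn1.
split=> [[depC minC] | [iCS /no_isthmus_restrP nu_lt nu_eq]].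
  have nu_del t : t \in partT C ->
      indep M (partS C) && (nu N (partT C :\ t) <= lambda M (partS C)).
    rewrite inE => tC.
    by have := minC _ tC; rewrite partS_setD1_inr partT_setD1_inr.
  have /andP[iCS nu_del_t0] := nu_del _ t0C.
  have lt_lambda_nu : lambda M (partS C) < nu N (partT C).
    by rewrite ltnNge; rewrite iCS in depC.
  have nu_eq : (lambda M (partS C)).+1 = nu N (partT C).
    by apply/eqP; rewrite eqn_leq lt_lambda_nu (leq_trans (nu_setD1 N t0C)).
  split=> //; apply/no_isthmus_restrP => t tC; rewrite -nu_eq ltnS.
  by case/andP: (nu_del _ tC).
split; first by rewrite iCS -nu_eq ltnn.
move=> [s|t] xC.
  have sC : s \in partS C by rewrite inE.
  rewrite partS_setD1_inl partT_setD1_inl (indep_sub (subsetDl _ _) iCS) /=.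
  by rewrite lambda_indep_setD1 // nu_eq.
have tC : t \in partT C by rewrite inE.
by rewrite partS_setD1_inr partT_setD1_inr iCS -ltnS nu_eq nu_lt.
Qed.

End FreeProduct.

Theorem proposition3p7 (S T : finType) (M : matroid S) (N : matroid T)
  (C : {set S + T}) :
  is_circuit_of (free_product_indep M N) C <->
  ((C \subset [set inl x | x : S]) /\ circuit M (partS C))
  \/ [/\ indep M (partS C), no_isthmus_restr N (partT C) &
         lambda M (partS C) + 1 = nu N (partT C)].
Proof.
rewrite partT_eq0; case: (set_0Vmem (partT C)) => [CT0 | [t0 t0C]].
  rewrite free_product_circuit_partT0 // CT0 eqxx nu0 addn1.
  by split=> [circMC | [[_ circMC] | []]] //; left.
have CT_neq0 : partT C != set0 by apply/set0Pn; exists t0.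
rewrite (free_product_circuit_partT_mem _ _ t0C) (negbTE CT_neq0).
by split=> [circLC | [[]|]] //; right.
Qed.
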